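(* Let $x \in X$ and $\gamma > 0$, and set \[ x^+ := P_x(\gamma F(x)), \qquad \phi_\gamma(x) := F(x) - F(x^+) + \frac{1}{\gamma}\left[\nabla\omega(x^+) - \nabla\omega(x)\right]. \] (a) $\tilde g(x^+, \phi_\gamma(x)) \le 0$ for any $x \in X$ and $\gamma > 0$. (b) If $\omega$ has ${\cal Q}$-Lipschitz continuous gradients w.r.t. $\|\cdot\|$, i.e. $\|\nabla\omega(x) - \nabla\omega(z)\|_* \le {\cal Q}\|x-z\|$ for all $x,z\in X$, and $F$ is Hölder continuous, i.e. $\|F(x)-F(y)\|_* \le L\|x-y\|^\nu$ for all $x,y \in X$ for some $\nu \in (0,1]$ and $L>0$, then \[ \|\phi_\gamma(x)\|_* \le L\left[\gamma\|R_\gamma(x)\|\right]^\nu + {\cal Q}\|R_\gamma(x)\|. \] (c) If, in addition to the hypotheses of (b), the set $X$ is bounded, then \[ g(x^+) \le 2\,\Omega_{\omega,X}\left[L\gamma^\nu\|R_\gamma(x)\|^\nu + {\cal Q}\|R_\gamma(x)\|\right]. \]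
   Context: $\mathbb{R}^n$ carries an inner product $\langle\cdot,\cdot\rangle$ and a norm $\|\cdot\|$ (not necessarily induced by the inner product), with dual norm $\|\cdot\|_*$. $X \subseteq \mathbb{R}^n$ is a nonempty closed convex set and $F: X \to \mathbb{R}^n$ is continuous. A distance generating function with modulus $\alpha>0$ w.r.t. $\|\cdot\|$ is a function $\omega: X \to \mathbb{R}$ that is convex and continuous on $X$, such that $X^o = \{x \in X : \partial\omega(x) \neq \emptyset\}$ is convex, and such that $\omega$ restricted to $X^o$ is continuously differentiable and satisfies $\langle \nabla\omega(x') - \nabla\omega(x), x' - x\rangle \ge \alpha\|x'-x\|^2$ for all $x, x' \in X^o$. Fix such an $\omega$. $V(x,z) = \omega(z) - \omega(x) - \langle \nabla\omega(x), z - x\rangle$, $P_x(\phi) = \arg\min_{z \in X}\{\langle \phi, z\rangle + V(x,z)\}$, and $R_\gamma(x) = \frac{1}{\gamma}[x - P_x(\gamma F(x))]$. Gap functions: $g(x) = \sup_{z\in X}\langle F(x), x - z\rangle$ and $\tilde g(x,\phi) = \sup_{z \in X}\langle F(x) + \phi, x - z\rangle$. Further $D_{\omega,X} = \sqrt{\max_{x\in X}\omega(x) - \min_{x\in X}\omega(x)}$ and $\Omega_{\omega,X} = \sqrt{2/\alpha}\,D_{\omega,X}$. *)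

From HB Require Import structures.
From mathcomp Require Import all_boot all_order all_algebra.
From mathcomp Require Import all_classical all_reals all_analysis.
Set Implicit Arguments. Unset Strict Implicit. Unset Printing Implicit Defensive.
Import Order.TTheory GRing.Theory Num.Theory numFieldTopology.Exports numFieldNormedType.Exports.
Local Open Scope classical_set_scope.
Local Open Scope ring_scope.

Section Defs.
Variables (R : realType) (n : nat).
Local Notation V := 'rV[R]_n.

Definition is_inner_product (ip : V -> V -> R) : Prop :=
  [/\ (forall x y, ip x y = ip y x),
      (forall a x y z, ip (a *: x + y) z = a * ip x z + ip y z)
    & (forall x, x != 0 -> 0 < ip x x)].

Definition is_norm (nrm : V -> R) : Prop :=
  [/\ (forall x, 0 <= nrm x),
      (forall x, nrm x = 0 -> x = 0),
      (forall a x, nrm (a *: x) = `|a| * nrm x)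
    & (forall x y, nrm (x + y) <= nrm x + nrm y)].

Definition dnorm (ip : V -> V -> R) (nrm : V -> R) (y : V) : R :=
  sup [set ip y x | x in [set x | nrm x <= 1]].

Definition convex_set (X : set V) : Prop :=
  forall x y (t : R), X x -> X y -> 0 <= t <= 1 -> X (t *: x + (1 - t) *: y).

Definition convex_on (X : set V) (f : V -> R) : Prop :=
  forall x y (t : R), X x -> X y -> 0 <= t <= 1 ->
    f (t *: x + (1 - t) *: y) <= t * f x + (1 - t) * f y.

Definition Xo (ip : V -> V -> R) (X : set V) (omega : V -> R) : set V :=
  [set x | X x /\ exists g : V, forall z, X z -> omega x + ip g (z - x) <= omega z].

(* distance generating function with modulus alpha w.r.t. nrm; gomega is
   the gradient of omega on X^o (a continuous selection of subgradients) *)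
Definition is_dgf (ip : V -> V -> R) (nrm : V -> R) (X : set V)
    (omega : V -> R) (gomega : V -> V) (alpha : R) : Prop :=
  [/\ 0 < alpha,
      convex_on X omega,
      {within X, continuous omega}
    & convex_set (Xo ip X omega)] /\
  [/\ (forall x, Xo ip X omega x ->
         forall z, X z -> omega x + ip (gomega x) (z - x) <= omega z),
      {within Xo ip X omega, continuous gomega}
    & (forall x x', Xo ip X omega x -> Xo ip X omega x' ->
         alpha * nrm (x' - x) ^+ 2 <= ip (gomega x' - gomega x) (x' - x))].

Definition Vdist (ip : V -> V -> R) (omega : V -> R) (gomega : V -> V) (x z : V) : R :=
  omega z - omega x - ip (gomega x) (z - x).

Definition prox (ip : V -> V -> R) (X : set V) (omega : V -> R) (gomega : V -> V)
    (x phi : V) : V :=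
  xget 0 [set p | X p /\ forall z, X z ->
     ip phi p + Vdist ip omega gomega x p <= ip phi z + Vdist ip omega gomega x z].

Definition Rgam (ip : V -> V -> R) (X : set V) (omega : V -> R) (gomega : V -> V)
    (F : V -> V) (gamma : R) (x : V) : V :=
  gamma^-1 *: (x - prox ip X omega gomega x (gamma *: F x)).

(* gap functions, valued in the extended reals (the sup may be +oo) *)
Definition gap (ip : V -> V -> R) (X : set V) (F : V -> V) (x : V) : \bar R :=
  ereal_sup [set (ip (F x) (x - z))%:E | z in X].

Definition gapt (ip : V -> V -> R) (X : set V) (F : V -> V) (x phi : V) : \bar R :=
  ereal_sup [set (ip (F x + phi) (x - z))%:E | z in X].

Definition Dwx (X : set V) (omega : V -> R) : R :=
  Num.sqrt (sup (omega @` X) - inf (omega @` X)).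

Definition Omegawx (X : set V) (omega : V -> R) (alpha : R) : R :=
  Num.sqrt (2 / alpha) * Dwx X omega.

Definition bounded_wrt (nrm : V -> R) (X : set V) : Prop :=
  exists M : R, forall x, X x -> nrm x <= M.

End Defs.

From Pilot Require Import Defs.
From HB Require Import structures.
From mathcomp Require Import all_boot all_order all_algebra.
From mathcomp Require Import all_classical all_reals all_analysis.
From mathcomp Require Import ring lra.
Set Implicit Arguments. Unset Strict Implicit. Unset Printing Implicit Defensive.
Import Order.TTheory GRing.Theory Num.Theory numFieldTopology.Exports numFieldNormedType.Exports.
Local Open Scope classical_set_scope.
Local Open Scope ring_scope.

(* Write x+ for the prox point P_x(gamma F(x)).  Its optimality condition on X,
   <gamma F(x) - grad omega(x) + grad omega(x+), z - x+> >= 0, is (a) after division by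
   gamma, because F(x+) + phi_gamma(x) = gamma^-1 (gamma F(x) - grad omega(x) + grad omega(x+)).
   (b) is the triangle inequality for the dual norm, since gamma R_gamma(x) = x - x+.  For (c),
   <F(x+), x+ - z> <= <-phi_gamma(x), x+ - z> <= ||phi_gamma(x)||_* ||x+ - z||, and strong
   convexity of omega at its minimiser bounds the diameter of X by 2 Omega.
   The gradient of omega is only available on X^o, so the existence of the prox point, its
   optimality condition and the strong convexity inequality are first proved on X^o (strong
   convexity by repeated halving of a segment) and then extended to X by continuity, using that
   X^o is dense in X: the minimiser of omega + K ||. - w||^2 over X lies in X^o and tends to w
   as K grows. *)

Section InnerProduct.
Variables (R : realType) (n : nat) (ip : 'rV[R]_n -> 'rV[R]_n -> R).
Hypothesis ip_inner : is_inner_product ip.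
Local Notation V := 'rV[R]_n.

Lemma ipC x y : ip x y = ip y x.
Proof. by case: ip_inner. Qed.

Lemma ipDl x y z : ip (x + y) z = ip x z + ip y z.
Proof. by case: ip_inner => _ lin _; rewrite -[x]scale1r lin mul1r scale1r. Qed.

Lemma ip0l z : ip 0 z = 0.
Proof. by apply: (addrI (ip 0 z)); rewrite -ipDl !addr0. Qed.

Lemma ipZl a x z : ip (a *: x) z = a * ip x z.
Proof. by case: ip_inner => _ lin _; rewrite -[a *: x]addr0 lin ip0l addr0. Qed.

Lemma ipNl x z : ip (- x) z = - ip x z.
Proof. by rewrite -scaleN1r ipZl mulN1r. Qed.

Lemma ipBl x y z : ip (x - y) z = ip x z - ip y z.
Proof. by rewrite ipDl ipNl. Qed.

Lemma ipDr x y z : ip z (x + y) = ip z x + ip z y.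
Proof. by rewrite ipC ipDl !(ipC z). Qed.

Lemma ip0r z : ip z 0 = 0.
Proof. by rewrite ipC ip0l. Qed.

Lemma ipZr a x z : ip z (a *: x) = a * ip z x.
Proof. by rewrite ipC ipZl ipC. Qed.

Lemma ipNr x z : ip z (- x) = - ip z x.
Proof. by rewrite ipC ipNl ipC. Qed.

Lemma ipBr x y z : ip z (x - y) = ip z x - ip z y.
Proof. by rewrite ipDr ipNr. Qed.

Lemma ipxx_addZ a b t :
  ip (a + t *: b) (a + t *: b) = ip a a + 2 * t * ip a b + t ^+ 2 * ip b b.
Proof. by rewrite !ipDl !ipDr !ipZl !ipZr (ipC b a); ring. Qed.

Lemma ipxx_gt0 x : x != 0 -> 0 < ip x x.
Proof. by case: ip_inner => _ _; apply. Qed.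

Lemma ip_expand x y : ip x y =
  \sum_(i < n) \sum_(j < n) x 0 i * y 0 j * ip (delta_mx 0 i) (delta_mx 0 j).
Proof.
rewrite {1}(row_sum_delta x) (big_morph (ip^~ y) (fun u v => ipDl u v y) (ip0l y)).
apply: eq_bigr => i _; rewrite ipZl {1}(row_sum_delta y).
rewrite (big_morph (ip _) (fun u v => ipDr u v _) (ip0r _)) mulr_sumr.
by apply: eq_bigr => j _; rewrite ipZr mulrA.
Qed.

Definition ip_bound := \sum_(i < n) \sum_(j < n) `|ip (delta_mx 0 i) (delta_mx 0 j)|.

Lemma ip_bound_ge0 : 0 <= ip_bound.
Proof. by do 2 apply: sumr_ge0 => ? _. Qed.

Lemma normr_coord_le (x : V) i : `|x 0 i| <= `|x|.
Proof. by rewrite [leRHS]/Num.Def.normr /= mx_normrE; apply/bigmax_geP; right; exists (0, i). Qed.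

Lemma normr_ip_le x y : `|ip x y| <= ip_bound * `|x| * `|y|.
Proof.
rewrite ip_expand /ip_bound -mulrA mulr_suml.
apply: le_trans (ler_norm_sum _ _ _) _; apply: ler_sum => i _; rewrite mulr_suml.
apply: le_trans (ler_norm_sum _ _ _) _; apply: ler_sum => j _.
rewrite normrM mulrC; apply: ler_wpM2l => //; rewrite normrM.
by apply: ler_pM => //; apply: normr_coord_le.
Qed.

Lemma ip_continuous (T : topologicalType) (f g : T -> V) :
  continuous f -> continuous g -> continuous (fun t => ip (f t) (g t)).
Proof.
move=> fc gc; under eq_fun do rewrite ip_expand.
have coordc (h : T -> V) i : continuous h -> continuous (fun t => h t 0 i).
  by move=> hc t; exact: continuous_comp (hc t) (@coord_continuous R 1 n 0 i _).
apply: (continuous_big add_continuous) => i _.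
apply: (continuous_big add_continuous) => j _ t.
by apply: cvgM; [apply: cvgM; apply: coordc | exact: cvg_cst].
Qed.

End InnerProduct.

Section RowVectors.
Variables (R : realType) (n : nat).
Local Notation V := 'rV[R]_n.

Lemma lipschitz_continuous (f : V -> R) k :
  (forall x y, `|f x - f y| <= k * `|x - y|) -> continuous f.
Proof.
move=> fk x; apply/(@cvgrPdist_lt _ _ _ _ (nbhs_filter (x : V))) => e e0.
have k1 : 0 < `|k| + 1 by rewrite ltr_pwDr.
apply/nbhs_ballP; exists (e / (`|k| + 1)); first exact: divr_gt0.
move=> y; rewrite -ball_normE /= ltr_pdivlMr // => xy.
apply: le_lt_trans (fk x y) _; apply: le_lt_trans xy.
have := ler_norm k; have := normr_ge0 (x - y); nra.
Qed.

Lemma subr_continuous (c : V) : continuous (fun z : V => z - c).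
Proof. by move=> z; apply: (@cvgB R _ _ (nbhs z)) => //; exact: cvg_cst. Qed.

Lemma normr_closed_bounded_compact (A : set V) M :
  closed A -> (forall x, A x -> `|x| <= M) -> compact A.
Proof.
move=> Acl AM; apply: bounded_closed_compact => //.
exists M; split; first exact: num_real.
by move=> N MN x Ax; apply: le_trans (AM x Ax) (ltW MN).
Qed.

Lemma closed_normr_le r : closed [set v : V | `|v| <= r].
Proof.
rewrite (_ : [set v | _] = Num.norm @^-1` [set y | y <= r]) //.
by apply: preimage_closed; [move=> v _; exact: norm_continuous | exact: closed_le].
Qed.

Lemma normr_normalize (v : V) : v != 0 -> `| `|v|^-1 *: v| = 1.
Proof. by move=> v0; rewrite normrZ normrV ?unitfE ?normr_eq0 // normr_id mulVf ?normr_eq0. Qed.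

Lemma homogeneous_lbound (f : V -> R) k : (0 < k)%N -> continuous f ->
    (forall a v, f (a *: v) = `|a| ^+ k * f v) -> (forall v, v != 0 -> 0 < f v) ->
  exists2 c, 0 < c & forall v, c * `|v| ^+ k <= f v.
Proof.
move=> k0 fc fZ fpos.
have f0 : f 0 = 0 by rewrite -(scale0r (0 : V)) fZ normr0 expr0n gtn_eqF // mulr0n mul0r.
have lb0 c : c * `|0 : V| ^+ k <= f 0.
  by rewrite f0 normr0 expr0n gtn_eqF // mulr0n mulr0.
have [[v1 v1n]|sphere0] := pselect (exists v : V, `|v| = 1); last first.
  exists 1 => // v; have [->|v0] := eqVneq v 0; first exact: lb0.
  by exfalso; apply: sphere0; exists (`|v|^-1 *: v); exact: normr_normalize.
have cS : compact [set v : V | `|v| = 1].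
  apply: (@normr_closed_bounded_compact _ 1) => [|v /= ->//].
  rewrite (_ : [set v | _] = Num.norm @^-1` [set 1]) //.
  by apply: preimage_closed; [move=> v _; exact: norm_continuous | exact: closed_eq].
have [c Sc cmin] := compact_EVT_min (ex_intro _ v1 v1n) cS (continuous_subspaceT fc).
rewrite inE in Sc; exists (f c); first by apply: fpos; rewrite -normr_eq0 Sc oner_neq0.
move=> v; have [->|v0] := eqVneq v 0; first exact: lb0.
have := cmin (`|v|^-1 *: v); rewrite inE /= normr_normalize // => /(_ erefl).
rewrite fZ normrV ?unitfE ?normr_eq0 // normr_id.
by rewrite exprVn ler_pdivlMl ?exprn_gt0 ?normr_gt0 // mulrC.
Qed.

Lemma ge0_within_limit (A : set V) (phi : V -> R) p :
    {within A, continuous phi} -> A p ->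
    (forall e, 0 < e -> exists2 y, A y & `|p - y| < e /\ 0 <= phi y) ->
  0 <= phi p.
Proof.
move=> /subspace_continuousP phic Ap approx; rewrite leNgt; apply/negP => phip.
have /cvgrPdist_lt/(_ (- phi p)) := phic p Ap; rewrite oppr_gt0 => /(_ phip).
rewrite /= nearE /within /= => /nbhs_normP[d d0 near_p].
have [y Ay [py phiy]] := approx d d0.
have := near_p y py Ay; rewrite /from_subspace /= distrC.
have := ler_norm (phi y - phi p); lra.
Qed.

End RowVectors.

Arguments subr_continuous {R n} c.

Lemma le0_forall_mul_le (R : realFieldType) (a b : R) :
  (forall t, 0 < t <= 1 -> a <= t * b) -> a <= 0.
Proof.
move=> ab; rewrite leNgt; apply/negP => a0.
have ab0 : 0 < a + `|b| by rewrite ltr_pwDl.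
have := ab (a / (a + `|b|)); rewrite divr_gt0 // ler_pdivrMr // mul1r lerDl normr_ge0.
rewrite mulrAC ler_pdivlMr // => /(_ isT) h.
by have := ler_norm b; nra.
Qed.

Lemma convex_comb_subr (R : pzRingType) (V : lmodType R) t (z p : V) :
  t *: z + (1 - t) *: p - p = t *: (z - p).
Proof. by rewrite scalerBl scale1r addrCA addrC addrK scalerBr. Qed.

Section Norm.
Variables (R : realType) (n : nat) (nrm : 'rV[R]_n -> R).
Hypothesis nrm_norm : is_norm nrm.
Local Notation V := 'rV[R]_n.

Lemma nrm_ge0 x : 0 <= nrm x. Proof. by case: nrm_norm. Qed.
Lemma nrm_eq0 x : nrm x = 0 -> x = 0. Proof. by case: nrm_norm => _ + _ _; apply. Qed.
Lemma nrmZ a x : nrm (a *: x) = `|a| * nrm x. Proof. by case: nrm_norm. Qed.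
Lemma nrmD x y : nrm (x + y) <= nrm x + nrm y. Proof. by case: nrm_norm. Qed.
Lemma nrm0 : nrm 0 = 0. Proof. by rewrite -(scale0r (0 : V)) nrmZ normr0 mul0r. Qed.
Lemma nrmN x : nrm (- x) = nrm x. Proof. by rewrite -scaleN1r nrmZ normrN normr1 mul1r. Qed.
Lemma nrmB x y : nrm (x - y) = nrm (y - x). Proof. by rewrite -nrmN opprB. Qed.

Lemma nrm_subB x y z : nrm (x - z) <= nrm (x - y) + nrm (y - z).
Proof. by rewrite -[x - z](subrKA y); apply: nrmD. Qed.

Definition nrm_bound := \sum_(i < n) nrm (delta_mx 0 i).

Lemma nrm_le_normr x : nrm x <= nrm_bound * `|x|.
Proof.
rewrite {1}(row_sum_delta x) /nrm_bound mulr_suml.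
elim/big_rec2: _ => [|i a b _ ab]; first by rewrite nrm0.
apply: le_trans (nrmD _ _) _; apply: lerD => //.
by rewrite nrmZ mulrC ler_wpM2l ?nrm_ge0 ?normr_coord_le.
Qed.

Lemma nrm_continuous : continuous nrm.
Proof.
apply: (@lipschitz_continuous _ _ _ nrm_bound) => x y; apply: le_trans (nrm_le_normr _).
have := nrm_subB x y 0; have := nrm_subB y x 0; rewrite !subr0 (nrmB y x).
by rewrite ler_norml; lra.
Qed.

Lemma nrm_lbound : exists2 c, 0 < c & forall v, c * `|v| <= nrm v.
Proof.
have [|||c c0 hc] := @homogeneous_lbound _ _ nrm 1 _ nrm_continuous.
- by [].
- by move=> a v; rewrite expr1 nrmZ.
- by move=> v v0; rewrite lt_def nrm_ge0 andbT; apply: contra v0 => /eqP/nrm_eq0->.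
by exists c => // v; have := hc v; rewrite expr1.
Qed.

End Norm.

Lemma ipxx_lbound (R : realType) n (ip : 'rV[R]_n -> 'rV[R]_n -> R) :
  is_inner_product ip -> exists2 c, 0 < c & forall v, c * `|v| ^+ 2 <= ip v v.
Proof.
move=> ip_inner; apply: homogeneous_lbound => //.
- by apply: ip_continuous => // v; exact: cvg_id.
- by move=> a v; rewrite ipZl ?ipZr // mulrA -expr2 real_normK ?num_real.
- exact: ipxx_gt0.
Qed.

(* Far from [v] the lower bound exceeds the value of [h] at a fixed point of [X], so [h]
   attains its minimum on a compact part of [X]. *)
Lemma coercive_min (R : realType) n (ip : 'rV[R]_n -> 'rV[R]_n -> R)
    (X : set 'rV[R]_n) (h : 'rV[R]_n -> R) (u v : 'rV[R]_n) (c0 k : R) :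
    is_inner_product ip -> X !=set0 -> closed X -> {within X, continuous h} ->
    0 < k -> (forall z, X z -> c0 + ip u (z - v) + k * `|z - v| ^+ 2 <= h z) ->
  exists2 p, X p & forall z, X z -> h p <= h z.
Proof.
move=> ip_inner [x0 Xx0] Xcl hc k0 hlb.
pose B := ip_bound ip * `|u|; pose D := `|h x0 - c0|.
pose r := `|x0 - v| + (B + D) / k + 1.
have B0 : 0 <= B by rewrite mulr_ge0 ?ip_bound_ge0.
have BDk : 0 <= (B + D) / k by apply: divr_ge0; [exact: addr_ge0 B0 (normr_ge0 _) | exact: ltW].
have far z : X z -> r < `|z - v| -> h x0 < h z.
  move=> Xz rz; apply: lt_le_trans (hlb z Xz).
  have := normr_ip_le ip_inner u (z - v); rewrite ler_norml -/B => /andP[ipu _].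
  set s := `|z - v| in rz ipu *.
  have := normr_ge0 (x0 - v); rewrite /r in rz => x0v.
  have s1 : 1 < s by lra.
  have : (B + D) / k < s - 1 by lra.
  rewrite ltr_pdivrMr // => ks.
  have := ler_norm (h x0 - c0); rewrite -/D => hD.
  have : 0 < s * (k * s - B - D - k) by apply: mulr_gt0; nra.
  have : 0 <= (s - 1) * D by apply: mulr_ge0; rewrite ?normr_ge0; lra.
  nra.
pose A := X `&` [set z | `|z| <= `|v| + r].
have box z : `|z - v| <= r -> `|z| <= `|v| + r.
  by move=> zr; rewrite -[z](subrK v) addrC; apply: le_trans (ler_normD _ _) _; rewrite lerD2l.
have Ax0 : A x0 by split => //; apply: box; rewrite leNgt; apply/negP => /(far _ Xx0); rewrite ltxx.
have cA : compact A.
  apply: (@normr_closed_bounded_compact _ _ _ (`|v| + r)); last by move=> z [].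
  by apply: closedI => //; exact: closed_normr_le.
have [p Ap pmin] := compact_EVT_min (ex_intro _ x0 Ax0) cA
  (continuous_subspaceW (@subIsetl _ X _) hc).
rewrite inE in Ap; case: Ap => Xp _; exists p => // z Xz.
have [zr|rz] := leP `|z - v| r; first by apply: pmin; rewrite inE; split => //; apply: box.
by apply: le_trans (ltW (far z Xz rz)); apply: pmin; rewrite inE.
Qed.

Section DualNorm.
Variables (R : realType) (n : nat) (ip : 'rV[R]_n -> 'rV[R]_n -> R) (nrm : 'rV[R]_n -> R).
Hypotheses (ip_inner : is_inner_product ip) (nrm_norm : is_norm nrm).

Let unit_ball_ne y : [set ip y x | x in [set x | nrm x <= 1]] !=set0.
Proof. by exists (ip y 0), 0 => //=; rewrite (nrm0 nrm_norm). Qed.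

Lemma dnorm_has_sup y : has_sup [set ip y x | x in [set x | nrm x <= 1]].
Proof.
split; first exact: unit_ball_ne.
have [cn cn0 hcn] := nrm_lbound nrm_norm.
exists (ip_bound ip * `|y| / cn) => _ [x /= x1 <-].
have hx : `|x| <= cn^-1 by rewrite -(ler_pM2l cn0) mulfV ?gt_eqF //; apply: le_trans (hcn x) x1.
apply: le_trans (ler_norm _) _; apply: le_trans (normr_ip_le ip_inner y x) _.
by rewrite -!mulrA ler_wpM2l ?ip_bound_ge0 // ler_wpM2l.
Qed.

Lemma dnorm_ub y x : nrm x <= 1 -> ip y x <= dnorm ip nrm y.
Proof. by move=> x1; apply: (sup_upper_bound (dnorm_has_sup y)); exists x. Qed.

Lemma dnorm_le y c : (forall x, nrm x <= 1 -> ip y x <= c) -> dnorm ip nrm y <= c.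
Proof. by move=> yc; apply: ge_sup; [exact: unit_ball_ne | move=> _ [x /= x1 <-]; apply: yc]. Qed.

Lemma dnorm_ge0 y : 0 <= dnorm ip nrm y.
Proof. by have := @dnorm_ub y 0; rewrite (nrm0 nrm_norm) ip0r // ler01; apply. Qed.

Lemma ip_le_dnorm y x : ip y x <= dnorm ip nrm y * nrm x.
Proof.
have [x0|xn0] := eqVneq (nrm x) 0.
  by rewrite (nrm_eq0 nrm_norm x0) ip0r // (nrm0 nrm_norm) mulr0.
have nx : 0 < nrm x by rewrite lt_def xn0 nrm_ge0.
have := @dnorm_ub y ((nrm x)^-1 *: x).
rewrite (nrmZ nrm_norm) ger0_norm ?invr_ge0 ?nrm_ge0 // mulVf // lexx ipZr // => /(_ isT).
by rewrite ler_pdivrMl // mulrC.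
Qed.

Lemma normr_ip_le_dnorm y x : `|ip y x| <= dnorm ip nrm y * nrm x.
Proof.
rewrite ler_norml ip_le_dnorm andbT.
by have := ip_le_dnorm y (- x); rewrite ipNr // (nrmN nrm_norm); lra.
Qed.

Lemma dnormD a b : dnorm ip nrm (a + b) <= dnorm ip nrm a + dnorm ip nrm b.
Proof.
apply: dnorm_le => x x1; rewrite ipDl //.
have := ip_le_dnorm a x; have := ip_le_dnorm b x.
have := dnorm_ge0 a; have := dnorm_ge0 b; have := nrm_ge0 nrm_norm x; nra.
Qed.

Lemma dnormZ c a : dnorm ip nrm (c *: a) <= `|c| * dnorm ip nrm a.
Proof.
apply: dnorm_le => x x1; rewrite ipZl //.
apply: le_trans (ler_norm _) _; rewrite normrM ler_wpM2l //.
apply: le_trans (normr_ip_le_dnorm a x) _.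
by have := dnorm_ge0 a; have := nrm_ge0 nrm_norm x; nra.
Qed.

End DualNorm.

Section DistanceGeneratingFunction.
Variables (R : realType) (n : nat) (ip : 'rV[R]_n -> 'rV[R]_n -> R) (nrm : 'rV[R]_n -> R).
Variables (X : set 'rV[R]_n) (omega : 'rV[R]_n -> R) (gomega : 'rV[R]_n -> 'rV[R]_n).
Variable alpha : R.
Hypotheses (ip_inner : is_inner_product ip) (nrm_norm : is_norm nrm).
Hypotheses (Xcl : closed X) (Xconv : Defs.convex_set X).
Hypothesis dgf : is_dgf ip nrm X omega gomega alpha.
Local Notation V := 'rV[R]_n.
Local Notation Xo' := (Xo ip X omega).

Lemma dgf_modulus_gt0 : 0 < alpha. Proof. by case: dgf => -[]. Qed.
Lemma dgf_convex : convex_on X omega. Proof. by case: dgf => -[]. Qed.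
Lemma dgf_continuous : {within X, continuous omega}. Proof. by case: dgf => -[]. Qed.
Lemma Xo_convex : Defs.convex_set Xo'. Proof. by case: dgf => -[]. Qed.
Lemma dgf_grad_continuous : {within Xo', continuous gomega}. Proof. by case: dgf => _ []. Qed.

Lemma dgf_subgrad y z : Xo' y -> X z -> omega y + ip (gomega y) (z - y) <= omega z.
Proof. by move=> Xoy Xz; case: dgf => _ [sub _ _]; exact: sub. Qed.

Lemma dgf_grad_monotone y z : Xo' y -> Xo' z ->
  alpha * nrm (z - y) ^+ 2 <= ip (gomega z - gomega y) (z - y).
Proof. by move=> Xoy Xoz; case: dgf => _ [_ _ mono]; exact: mono. Qed.

Lemma Xo_sub y : Xo' y -> X y. Proof. by case. Qed.

Lemma argmin_Xo s p : X p ->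
  (forall z, X z -> ip s p + omega p <= ip s z + omega z) -> Xo' p.
Proof.
move=> Xp pmin; split => //; exists (- s) => z Xz.
by have := pmin z Xz; rewrite ipNl ?ipBr //; lra.
Qed.

(* The inequality holds at the points of ]p, z] by the subgradient inequality there, and
   passes to [p] by continuity of [gomega] on [X^o]. *)
Lemma argmin_grad_Xo s p : X p ->
    (forall z, X z -> ip s p + omega p <= ip s z + omega z) ->
  forall z, Xo' z -> 0 <= ip (s + gomega p) (z - p).
Proof.
move=> Xp pmin z Xoz; have Xop := argmin_Xo Xp pmin.
pose zt t := t *: z + (1 - t) *: p.
have Xozt t : 0 <= t <= 1 -> Xo' (zt t) by move=> /andP[t0 t1]; apply: Xo_convex; rewrite ?t0.
have zt_ge0 t : 0 < t <= 1 -> 0 <= ip (s + gomega (zt t)) (z - p).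
  move=> /andP[t0 t1]; have Xoz_t : Xo' (zt t) by apply: Xozt; rewrite ltW.
  have h1 := dgf_subgrad Xoz_t Xp; have h2 := pmin _ (Xo_sub Xoz_t).
  have step : zt t - p = t *: (z - p) := convex_comb_subr t z p.
  rewrite -opprB step ipNr ?ipZr // in h1.
  have ipsz : ip s (zt t) = ip s p + t * ip s (z - p).
    by rewrite -ipZr // -step ipBr //; ring.
  by rewrite ipDl // -(pmulr_rge0 _ t0) mulrDr; lra.
have gc : {within Xo', continuous (fun y => s + gomega y)}.
  by move=> y; apply: cvgD; [exact: cvg_cst | exact: dgf_grad_continuous].
apply: (@ge0_within_limit _ _ Xo' (fun y => ip (s + gomega y) (z - p))) => //.
  exact: (ip_continuous ip_inner gc (fun _ => cvg_cst _)).
move=> e e0; have zp1 : 0 < `|z - p| + 1 by rewrite ltr_wpDl.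
pose t := Num.min 1 (e / (`|z - p| + 1)).
have t0 : 0 < t by rewrite lt_min ltr01 divr_gt0.
have t1 : t <= 1 by rewrite ge_min lexx.
exists (zt t); first by apply: Xozt; rewrite ltW.
split; last by apply: zt_ge0; rewrite t0.
rewrite -opprB convex_comb_subr normrN normrZ ger0_norm ?ltW //.
have : t <= e / (`|z - p| + 1) by rewrite ge_min lexx orbT.
rewrite ler_pdivlMr // => te; apply: lt_le_trans te.
by rewrite ltr_pM2l // ltrDl.
Qed.

Variable x : 'rV[R]_n.
Hypothesis Xo_x : Xo' x.

(* The minimiser [y] of [omega + K ip (. - w) (. - w)] over [X] has [2 K (w - y)] as a
   subgradient. *)
Lemma penalized_min_Xo w K : X w -> 0 < K ->
  exists2 y, Xo' y & omega y + K * ip (y - w) (y - w) <= omega w.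
Proof.
move=> Xw K0; have [cq cq0 hcq] := ipxx_lbound ip_inner.
pose h z := omega z + K * ip (z - w) (z - w).
have qc : continuous (fun z : V => K * ip (z - w) (z - w)).
  move=> z; apply: (@cvgM _ _ (nbhs z)); first exact: cvg_cst.
  exact: (ip_continuous ip_inner (subr_continuous w) (subr_continuous w)).
have hc : {within X, continuous h}.
  by move=> z; apply: cvgD; [exact: dgf_continuous | exact: (continuous_subspaceT qc)].
have [y Xy ymin] : exists2 y, X y & forall z, X z -> h y <= h z.
  apply: (coercive_min (u := gomega x) (v := w) (c0 := omega x + ip (gomega x) (w - x))
    (k := K * cq) ip_inner (ex_intro _ w Xw) Xcl hc); first exact: mulr_gt0.
  move=> z Xz; have := dgf_subgrad Xo_x Xz.
  rewrite -[z - x](subrKA w) (ipDr ip_inner (z - w)).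
  have := ler_wpM2l (ltW K0) (hcq (z - w)); rewrite /h mulrA; lra.
exists y; last by have := ymin w Xw; rewrite /h subrr ip0l // mulr0 addr0.
split => //; exists (2 * K *: (w - y)) => z Xz.
pose a := omega y - omega z - 2 * K * ip (y - w) (z - y).
suff : a <= 0 by rewrite /a ipZl // -(opprB y w) ipNl //; lra.
apply: (@le0_forall_mul_le _ a (K * ip (z - y) (z - y))) => t /andP[t0 t1].
have Xzt : X (t *: z + (1 - t) *: y) by apply: Xconv; rewrite ?(ltW t0).
have := ymin _ Xzt; rewrite /h.
have -> : t *: z + (1 - t) *: y - w = (y - w) + t *: (z - y).
  by rewrite -(convex_comb_subr t z y) [RHS]addrC subrKA.
have := dgf_convex Xz Xy (t := t); rewrite ltW // t1 => /(_ isT) hcv.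
rewrite ipxx_addZ // => hm.
have : t * a <= t * (t * (K * ip (z - y) (z - y))) by rewrite /a; lra.
by rewrite ler_pM2l.
Qed.

Lemma Xo_dense w e : X w -> 0 < e -> exists2 y, Xo' y & `|w - y| < e.
Proof.
move=> Xw e0; have [cq cq0 hcq] := ipxx_lbound ip_inner.
pose B := ip_bound ip * `|gomega x|.
pose C := omega w - omega x - ip (gomega x) (w - x).
have B0 : 0 <= B by rewrite mulr_ge0 ?ip_bound_ge0.
have C0 : 0 <= C by have := dgf_subgrad Xo_x Xw; rewrite /C; lra.
have Ce : 0 <= C / e by apply: divr_ge0 => //; exact: ltW.
pose K := (C / e + B + 1) / (cq * e).
have K0 : 0 < K by apply: divr_gt0; [lra | exact: mulr_gt0].
have [y Xoy hy] := penalized_min_Xo Xw K0.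
exists y => //; rewrite ltNge; apply/negP => er.
set r := `|w - y| in er; have r0 : 0 < r by apply: lt_le_trans er.
have up : K * (cq * r ^+ 2) <= C + B * r.
  have h1 : K * (cq * r ^+ 2) <= K * ip (y - w) (y - w).
    by apply: ler_wpM2l; [exact: ltW | rewrite /r distrC; exact: hcq].
  have h2 := dgf_subgrad Xo_x (Xo_sub Xoy).
  have := normr_ip_le ip_inner (gomega x) (y - w).
  rewrite -/B ler_norml distrC -/r => /andP[h3 _].
  rewrite -[y - x](subrKA w) ipDr // in h2; rewrite /C; lra.
have KC : K * cq * e = C / e + B + 1 by rewrite /K; field; rewrite ?gt_eqF.
have low : K * cq * e * r <= K * (cq * r ^+ 2).
  rewrite expr2 !mulrA; apply: ler_wpM2r; first exact: ltW.
  by apply: ler_wpM2l => //; exact: mulr_ge0 (ltW K0) (ltW cq0).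
have Cr : C / e * e <= C / e * r by apply: ler_wpM2l.
rewrite divfK ?gt_eqF // in Cr.
clearbody r K C; rewrite KC !mulrDl mul1r in low; lra.
Qed.

Lemma Xo_ge0_extend (Phi : 'rV[R]_n -> R) : {within X, continuous Phi} ->
  (forall y, Xo' y -> 0 <= Phi y) -> forall z, X z -> 0 <= Phi z.
Proof.
move=> Phic Phi0 z Xz; apply: (ge0_within_limit Phic Xz) => e e0.
by have [y Xoy zy] := Xo_dense Xz e0; exists y; [exact: Xo_sub | split => //; exact: Phi0].
Qed.

Lemma argmin_grad s p : X p ->
    (forall z, X z -> ip s p + omega p <= ip s z + omega z) ->
  forall z, X z -> 0 <= ip (s + gomega p) (z - p).
Proof.
move=> Xp pmin; apply: Xo_ge0_extend; last exact: argmin_grad_Xo.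
apply: continuous_subspaceT.
exact: (ip_continuous ip_inner (fun _ => cvg_cst _) (subr_continuous p)).
Qed.

(* Applying the k-th estimate on both halves of [y, z] and the strong monotonicity
   of the gradient between y and the midpoint gives the (k+1)-th one. *)
Lemma strong_convex_Xo_approx k y z : Xo' y -> Xo' z ->
  omega y + ip (gomega y) (z - y) + alpha / 2 * (1 - 2^-1 ^+ k) * nrm (z - y) ^+ 2
    <= omega z.
Proof.
elim: k y z => [|k IH] y z Xoy Xoz.
  by rewrite expr0 subrr mulr0 mul0r addr0; apply: dgf_subgrad => //; exact: Xo_sub.
have half01 : 0 <= (2^-1 : R) <= 1 by rewrite invr_ge0 ler0n /= invf_le1 // ?ler1n.
set m := 2^-1 *: z + (1 - 2^-1) *: y.
have Xom : Xo' m by apply: Xo_convex.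
have my : m - y = 2^-1 *: (z - y) by rewrite convex_comb_subr.
have zm : z - m = 2^-1 *: (z - y) by apply/rowP => i; rewrite /m !mxE; field.
have h1 := IH m z Xom Xoz; have h2 := IH y m Xoy Xom.
have h3 := dgf_grad_monotone Xoy Xom.
rewrite zm ipZr // nrmZ // in h1; rewrite my ipZr // nrmZ // in h2.
rewrite my ipZr // nrmZ // ipBl // in h3.
have a0 := dgf_modulus_gt0; rewrite exprS.
set hk := (2^-1 : R) ^+ k in h1 h2 *; set N := nrm (z - y) in h1 h2 h3 *.
rewrite ger0_norm ?invr_ge0 ?ler0n // in h1 h2 h3.
nra.
Qed.

Lemma strong_convex_Xo y z : Xo' y -> Xo' z ->
  omega y + ip (gomega y) (z - y) + alpha / 2 * nrm (z - y) ^+ 2 <= omega z.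
Proof.
move=> Xoy Xoz; set N := nrm (z - y) ^+ 2.
have lim : (fun k => alpha / 2 * (1 - 2^-1 ^+ k) * N) @ \oo --> alpha / 2 * (1 - 0) * N.
  apply: cvgMr_tmp; apply: cvgMl_tmp; apply: cvgB; first exact: cvg_cst.
  by apply: cvg_expr; rewrite ger0_norm ?invr_ge0 // invf_lt1 // ltr1n.
rewrite subr0 mulr1 in lim.
suff : alpha / 2 * N <= omega z - omega y - ip (gomega y) (z - y) by lra.
apply: (cvgr_to_le lim); apply: nearW => k.
by have := strong_convex_Xo_approx k Xoy Xoz; rewrite /N; lra.
Qed.

Lemma strong_convex y z : Xo' y -> X z ->
  omega y + ip (gomega y) (z - y) + alpha / 2 * nrm (z - y) ^+ 2 <= omega z.
Proof.
move=> Xoy Xz; pose b z := omega y + ip (gomega y) (z - y) + alpha / 2 * nrm (z - y) ^+ 2.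
have nc : continuous (fun z : V => nrm (z - y)).
  move=> u; apply: (continuous_comp (subr_continuous y u)); exact: nrm_continuous.
have bc : continuous b.
  move=> u; apply: (@cvgD _ _ _ (nbhs u)); last exact: cvgMl_tmp (cvgM (nc u) (nc u)).
  apply: (@cvgD _ _ _ (nbhs u)); first exact: cvg_cst.
  exact: (ip_continuous ip_inner (fun _ => cvg_cst _) (subr_continuous y)).
rewrite -subr_ge0; apply: (@Xo_ge0_extend (fun z => omega z - b z) _ _ z Xz).
  by move=> u; apply: cvgB; [exact: dgf_continuous | exact: (@continuous_subspaceT _ _ X _ bc u)].
by move=> w Xow; have := strong_convex_Xo Xoy Xow; rewrite /b; lra.
Qed.

Lemma exists_argmin_ip_omega s :
  exists2 p, X p & forall z, X z -> ip s p + omega p <= ip s z + omega z.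
Proof.
have [cn cn0 hcn] := nrm_lbound nrm_norm; have a0 := dgf_modulus_gt0.
have hc : {within X, continuous (fun z => ip s z + omega z)}.
  move=> z; apply: cvgD; last exact: dgf_continuous.
  apply: continuous_subspaceT.
  exact: (ip_continuous ip_inner (fun _ => cvg_cst _) (fun u => @cvg_id _ (nbhs u))).
apply: (coercive_min (u := s + gomega x) (v := x) (c0 := ip s x + omega x)
  (k := alpha / 2 * cn ^+ 2) ip_inner (ex_intro _ x (Xo_sub Xo_x)) Xcl hc).
  by rewrite mulr_gt0 ?divr_gt0 ?exprn_gt0.
move=> z Xz; have := strong_convex Xo_x Xz.
have cz0 : 0 <= cn * `|z - x| by rewrite mulr_ge0 ?(ltW cn0).
have : (cn * `|z - x|) ^+ 2 <= nrm (z - x) ^+ 2 by rewrite !expr2 ler_pM ?hcn.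
have a20 : 0 <= alpha / 2 by rewrite divr_ge0 ?ltW.
move=> /(ler_wpM2l a20); rewrite ipDl // !ipBr // exprMn mulrA; lra.
Qed.

(* Strong convexity at the minimiser [p] of [omega] gives
   [alpha / 2 * nrm (z - p) ^+ 2 <= omega z - omega p <= sup omega - inf omega]. *)
Lemma nrm_sub_le_Omega : bounded_wrt nrm X ->
  forall z z', X z -> X z' -> nrm (z - z') <= 2 * Omegawx X omega alpha.
Proof.
move=> [M XM]; have a0 := dgf_modulus_gt0.
have [p Xp pmin] := exists_argmin_ip_omega 0; have Xop := argmin_Xo Xp pmin.
have [cn cn0 hcn] := nrm_lbound nrm_norm.
have cX : compact X.
  apply: (@normr_closed_bounded_compact _ _ _ (M / cn)) => // z Xz.
  by rewrite ler_pdivlMr // mulrC; apply: le_trans (hcn z) (XM z Xz).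
have hsup : has_sup (omega @` X).
  apply: compact_has_sup; first by exists (omega p), p.
  exact: continuous_compact dgf_continuous cX.
have hlb : has_lbound (omega @` X).
  by exists (omega p) => _ [z Xz <-]; have := pmin z Xz; rewrite !ip0l //; lra.
set D := sup (omega @` X) - inf (omega @` X).
have near_p z : X z -> nrm (z - p) <= Omegawx X omega alpha.
  move=> Xz; have := strong_convex Xop Xz; have := argmin_grad Xp pmin Xz.
  have : omega z <= sup (omega @` X) by apply: sup_upper_bound => //; exists z.
  have : inf (omega @` X) <= omega p by apply: ge_inf => //; exists p.
  rewrite add0r => h1 h2 h3 h4.
  have sq : nrm (z - p) ^+ 2 <= 2 / alpha * D.
    rewrite -(ler_pM2l (_ : 0 < alpha / 2)) ?divr_gt0 //.
    have -> : alpha / 2 * (2 / alpha * D) = D by field; rewrite gt_eqF.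
    rewrite /D; lra.
  have a2 : 0 <= 2 / alpha by rewrite divr_ge0 // ltW.
  rewrite /Omegawx /Dwx -/D -(sqrtrM _ a2) -[nrm _]ger0_norm ?nrm_ge0 // -sqrtr_sqr.
  by rewrite ler_sqrt // (le_trans _ sq) // exprn_ge0 // nrm_ge0.
move=> z z' Xz Xz'; apply: le_trans (nrm_subB nrm_norm z p z') _.
by rewrite (nrmB nrm_norm p z'); have := near_p z Xz; have := near_p z' Xz'; lra.
Qed.

Lemma prox_argmin a : let p := prox ip X omega gomega x a in
  X p /\ forall z, X z -> ip (a - gomega x) p + omega p <= ip (a - gomega x) z + omega z.
Proof.
have obj z : ip a z + Vdist ip omega gomega x z =
    ip (a - gomega x) z + omega z + (ip (gomega x) x - omega x).
  by rewrite /Vdist ipBl // ipBr //; ring.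
have [q Xq qmin] := exists_argmin_ip_omega (a - gomega x).
have /(xgetPex 0) : exists q, X q /\ forall z, X z ->
    ip a q + Vdist ip omega gomega x q <= ip a z + Vdist ip omega gomega x z.
  by exists q; split => // z Xz; rewrite !obj lerD2r qmin.
rewrite -/(prox ip X omega gomega x a) => -[Xp pmin]; split => // z Xz.
by have := pmin z Xz; rewrite !obj lerD2r.
Qed.

Variables (F : 'rV[R]_n -> 'rV[R]_n) (gamma : R).
Hypothesis gamma_gt0 : 0 < gamma.
Local Notation xp := (prox ip X omega gomega x (gamma *: F x)).
Local Notation phi := (F x - F xp + gamma^-1 *: (gomega xp - gomega x)).
Local Notation Rg := (Rgam ip X omega gomega F gamma x).

(* [F xp + phi] is the normal vector of the prox optimality condition, divided by [gamma]. *)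
Lemma prox_variational z : X z -> ip (F xp + phi) (xp - z) <= 0.
Proof.
have [Xxp xpmin] := prox_argmin (gamma *: F x).
have key : F xp + phi = gamma^-1 *: (gamma *: F x - gomega x + gomega xp).
  by apply/rowP => i; rewrite !mxE; field; rewrite gt_eqF.
move=> Xz; rewrite key ipZl // -(opprB z) ipNr // mulrN oppr_le0.
by apply: mulr_ge0; [rewrite invr_ge0 ltW | exact: argmin_grad Xxp xpmin z Xz].
Qed.

Lemma gapt_prox_le0 : (gapt ip X F xp phi <= 0)%E.
Proof. by apply: ge_ereal_sup => _ [z Xz <-]; rewrite lee_fin prox_variational. Qed.

Lemma dnorm_phi_le Q L nu :
    (forall y z, Xo' y -> Xo' z -> dnorm ip nrm (gomega y - gomega z) <= Q * nrm (y - z)) ->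
    (forall y z, X y -> X z -> dnorm ip nrm (F y - F z) <= L * nrm (y - z) `^ nu) ->
  dnorm ip nrm phi <= L * (gamma * nrm Rg) `^ nu + Q * nrm Rg.
Proof.
move=> gradQ FL; have [Xxp xpmin] := prox_argmin (gamma *: F x).
have g1 : 0 <= gamma^-1 by rewrite invr_ge0 ltW.
have nRg : nrm Rg = gamma^-1 * nrm (x - xp) by rewrite /Rgam nrmZ // ger0_norm.
have -> : gamma * nrm Rg = nrm (x - xp) by rewrite nRg mulrA mulfV ?gt_eqF ?mul1r.
apply: le_trans (dnormD ip_inner nrm_norm _ _) _; apply: lerD; first exact/FL/Xxp/Xo_sub.
apply: le_trans (dnormZ ip_inner nrm_norm _ _) _.
rewrite ger0_norm // nRg (nrmB nrm_norm) mulrCA ler_wpM2l //.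
exact/gradQ/Xo_x/(argmin_Xo Xxp xpmin).
Qed.

Lemma gap_prox_le B : dnorm ip nrm phi <= B -> bounded_wrt nrm X ->
  (gap ip X F xp <= (2 * Omegawx X omega alpha * B)%:E)%E.
Proof.
move=> phiB Xbd; have [Xxp _] := prox_argmin (gamma *: F x).
apply: ge_ereal_sup => _ [z Xz <-]; rewrite lee_fin.
have := prox_variational Xz; rewrite ipDl // => hvar.
have := normr_ip_le_dnorm ip_inner nrm_norm phi (xp - z).
have := nrm_sub_le_Omega Xbd Xxp Xz; have := dnorm_ge0 ip_inner nrm_norm phi.
have := nrm_ge0 nrm_norm (xp - z); have := ler_norm (- ip phi (xp - z)).
rewrite normrN; nra.
Qed.

End DistanceGeneratingFunction.

Lemma convex_set_comb (R : realType) n (X : set 'rV[R]_n) :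
  convex_set X -> Defs.convex_set X.
Proof.
move=> Xconv x y t Xx Xy /andP[t0 t1].
by have := Xconv x y (Itv01 t0 t1); rewrite !inE; apply.
Qed.

Unset Implicit Arguments.
Theorem proposition3 (R : realType) (n : nat)
  (ip : 'rV[R]_n -> 'rV[R]_n -> R) (nrm : 'rV[R]_n -> R)
  (X : set 'rV[R]_n) (F : 'rV[R]_n -> 'rV[R]_n)
  (omega : 'rV[R]_n -> R) (gomega : 'rV[R]_n -> 'rV[R]_n) (alpha : R) :
  is_inner_product ip -> is_norm nrm ->
  X !=set0 -> closed X -> convex_set X ->
  {within X, continuous F} ->
  is_dgf ip nrm X omega gomega alpha ->
  forall (x : 'rV[R]_n) (gamma : R),
    Xo ip X omega x -> 0 < gamma ->
    let xp := prox ip X omega gomega x (gamma *: F x) in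
    let phi := F x - F xp + gamma^-1 *: (gomega xp - gomega x) in
    let Rg := Rgam ip X omega gomega F gamma x in
    (* (a) *)
    (gapt ip X F xp phi <= 0)%E /\
    (forall (Q L nu : R),
      (forall y z, Xo ip X omega y -> Xo ip X omega z ->
         dnorm ip nrm (gomega y - gomega z) <= Q * nrm (y - z)) ->
      0 < nu <= 1 -> 0 < L ->
      (forall y z, X y -> X z -> dnorm ip nrm (F y - F z) <= L * nrm (y - z) `^ nu) ->
      (* (b) *)
      dnorm ip nrm phi <= L * (gamma * nrm Rg) `^ nu + Q * nrm Rg /\
      (* (c) *)
      (bounded_wrt nrm X ->
       (gap ip X F xp <=
        (2 * Omegawx X omega alpha * (L * gamma `^ nu * nrm Rg `^ nu + Q * nrm Rg))%:E)%E)).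
Proof.
move=> ip_inner nrm_norm _ Xcl /convex_set_comb Xconv _ dgf x gamma Xo_x gamma_gt0 xp phi Rg.
split; first exact: (gapt_prox_le0 ip_inner nrm_norm Xcl Xconv dgf Xo_x F gamma_gt0).
move=> Q L nu gradQ _ _ FL.
have phiB := dnorm_phi_le ip_inner nrm_norm Xcl Xconv dgf Xo_x gamma_gt0 gradQ FL.
split=> // Xbd; rewrite -[L * _ * _]mulrA -(powRM nu (ltW gamma_gt0) (nrm_ge0 nrm_norm Rg)).
exact: (gap_prox_le ip_inner nrm_norm Xcl Xconv dgf Xo_x gamma_gt0 phiB Xbd).
Qed.
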